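(* Let $\{t_n\}$, $\mu_n$, $A$, $B$ and $\{s_n\}$ be as follows: $\{t_n\}_{n\in\mathbb Z}\subset\mathbb R$ increasing with $t_n\to\pm\infty$ as $n\to\pm\infty$; $\mu_n>0$ with $\sum_n\mu_n<\infty$; $A$ entire, real on $\mathbb R$, with only simple zeros, exactly at the $t_n$; $B$ entire defined by $B(z)/A(z)=\sum_n\mu_n/(z-t_n)$; $s_n$ the zero of $B$ in $(t_n,t_{n+1})$. Put $I_n=[t_n,t_{n+1}]$ and assume $|I_k|\asymp|I_n|$ for $n\le k\le 2n$ (constants independent of $k,n$), and that $|t_{an}|\ge\rho|t_n|$ for some $a\ge2$, $\rho>1$ and all $n$. Then for every $\delta>0$ the set of indices $n$ with $t_n>0$ and $t_{n+1}-s_n\ge\delta|I_n|$ has zero density, and likewise the set of indices $n$ with $t_n<0$ and $s_n-t_n\ge\delta|I_n|$ has zero density.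
   Context: A set $\mathcal N$ of integers has zero density if $\operatorname{card}\{n\in\mathcal N:|n|\le R\}/R\to0$ as $R\to\infty$. The notation $U\asymp V$ means $C^{-1}V\le U\le CV$ for a constant $C>0$. *)

From Stdlib Require Import Reals ZArith List.
Open Scope R_scope.

Definition Cx : Type := (R * R)%type.
Definition Cre (z : Cx) : R := fst z.
Definition Cim (z : Cx) : R := snd z.
Definition RtoC (x : R) : Cx := (x, 0).
Definition C0 : Cx := (0, 0).
Definition Cadd (z w : Cx) : Cx := (fst z + fst w, snd z + snd w).
Definition Csub (z w : Cx) : Cx := (fst z - fst w, snd z - snd w).
Definition Cmul (z w : Cx) : Cx :=
  (fst z * fst w - snd z * snd w, fst z * snd w + snd z * fst w).
Definition Cinv (z : Cx) : Cx :=
  let d := fst z * fst z + snd z * snd z in (fst z / d, - snd z / d).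
Definition Cdiv (z w : Cx) : Cx := Cmul z (Cinv w).
Definition Cnorm (z : Cx) : R := sqrt (fst z * fst z + snd z * snd z).

Definition has_Cderiv (f : Cx -> Cx) (z l : Cx) : Prop :=
  forall eps, 0 < eps -> exists d, 0 < d /\
    forall h, h <> C0 -> Cnorm h < d ->
      Cnorm (Csub (Cdiv (Csub (f (Cadd z h)) (f z)) h) l) < eps.

Definition entire (f : Cx -> Cx) : Prop :=
  forall z, exists l, has_Cderiv f z l.

Definition Zseries (u : Z -> R) (l : R) : Prop :=
  exists l1 l2,
    infinite_sum (fun n => u (Z.of_nat n)) l1 /\
    infinite_sum (fun n => u (- Z.of_nat (S n))%Z) l2 /\
    l = l1 + l2.

Definition Zseries_C (g : Z -> Cx) (S : Cx) : Prop :=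
  Zseries (fun n => Cre (g n)) (Cre S) /\ Zseries (fun n => Cim (g n)) (Cim S).

(* card {n in N : |n| <= R} / R -> 0 as R -> oo, phrased through lists of
   distinct elements (the set is finite, so its cardinality is the maximal
   length of such a list). *)
Definition zero_density (N : Z -> Prop) : Prop :=
  forall eps, 0 < eps -> exists R0, forall (Rr : R) (l : list Z),
    R0 <= Rr -> NoDup l ->
    (forall n, In n l -> N n /\ Rabs (IZR n) <= Rr) ->
    INR (length l) <= eps * Rr.

From Stdlib Require Import Reals ZArith List.
From HB Require Import structures.
From mathcomp Require Import all_boot all_order all_algebra.
From mathcomp.real_closed Require Import polyrcf.
From mathcomp Require ring lra.
From mathcomp Require Import zify.
From mathcomp Require Import Rstruct.
Set Implicit Arguments. Unset Strict Implicit. Unset Printing Implicit Defensive.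
Import Order.TTheory GRing.Theory Num.Theory.

(* Corollary 5.4.  At a zero s_n of B the real series sum_k mu_k / (s_n - t_k)
   vanishes (balance_at_zeros), and the growth condition forces t_0 = 0.  On the
   half-line n >= 0, cut [0, R] into dyadic blocks [N, 2N).  Boole's inequality for
   the rational function mu_0 / (2 t_(2N)) + sum_(N0 <= k <= K) mu_k / (x - t_k)
   bounds the sum of the gaps t_(n+1) - s_n over a block by 2 eta t_(2N) / mu_0,
   where eta is the mass beyond N0 (block_gap_sum).  The regularity hypotheses give
   t_(2N) <= C N |I_N| and |I_n| >= |I_N| / K on the block, so a block has at most
   C' eta N late zeros (block_count); summing over blocks, the density is at most
   C'' eta, which is arbitrarily small (half_line_density).  The negative side is
   the positive side of the data reflected by n |-> -n (half_line_data_reflected).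
   Layout: Boole's inequality over a real closed field; finite sums and series;
   counting and zero density; the half-line argument; Z-indexed data; the corollary. *)

(* Boole's inequality for rational functions.  For nodes a_0 < ... < a_m,
   weights c_i > 0 and lam > 0, the function lam + sum_i c_i / (x - a_i)
   has a zero r_k in each gap (a_k, a_(k+1)), it is positive on (a_k, r_k),
   and the gaps lie mostly to the left of the zeros:
   sum_k (a_(k+1) - r_k) <= (sum_i c_i) / lam.  The zeros, together with one
   extra zero left of a_0, are the m + 1 roots of the degree m + 1 polynomial
   Q = lam * prod_j (X - a_j) + sum_i c_i prod_(j <> i) (X - a_j); comparing
   the coefficients of X^m in Q and in its factorization gives the identity
   sum_k (a_(k+1) - r_k) + (a_0 - r_left) = (sum_i c_i) / lam. *)
Module BooleInequality.
Import mathcomp.algebra_tactics.ring mathcomp.algebra_tactics.lra.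
Section Boole.
Local Open Scope ring_scope.
Variable R : rcfType.
Variables (m : nat) (a c : nat -> R) (lam : R).
Hypothesis lam_gt0 : 0 < lam.
Hypothesis a_incr : forall i, (i < m)%N -> a i < a i.+1.
Hypothesis c_pos : forall i, (i <= m)%N -> 0 < c i.

Lemma a_lt i j : (i < j)%N -> (j <= m)%N -> a i < a j.
Proof.
elim: j => // j IH; rewrite ltnS leq_eqVlt => /orP[/eqP->|hij] hj; first exact: a_incr.
exact: lt_trans (IH hij (ltnW hj)) (a_incr hj).
Qed.

Lemma a_le i j : (i <= j)%N -> (j <= m)%N -> a i <= a j.
Proof. rewrite leq_eqVlt => /orP[/eqP->|h] hj //; exact/ltW/a_lt. Qed.

Lemma ord_le (j : 'I_m.+1) : (j <= m)%N. Proof. by have := ltn_ord j; rewrite ltnS. Qed.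

Lemma c_pos_ord (j : 'I_m.+1) : 0 < c j. Proof. exact: c_pos (ord_le j). Qed.

Definition node_poly := \prod_(j < m.+1) ('X - (a j)%:P).
Definition cofactor (i : 'I_m.+1) := \prod_(j < m.+1 | j != i) ('X - (a j)%:P).
Definition boole_poly := lam *: node_poly + \sum_(i < m.+1) c i *: cofactor i.

Lemma horner_boole x : boole_poly.[x] = lam * \prod_(j < m.+1) (x - a j)
   + \sum_(i < m.+1) c i * \prod_(j < m.+1 | j != i) (x - a j).
Proof.
rewrite /boole_poly hornerD hornerZ horner_sum /node_poly horner_prod; congr (_ * _ + _).
  by apply: eq_bigr => j _; rewrite hornerXsubC.
apply: eq_bigr => i _; rewrite hornerZ /cofactor horner_prod; congr (_ * _).
by apply: eq_bigr => j _; rewrite hornerXsubC.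
Qed.

Lemma boole_at_node (k : 'I_m.+1) :
  boole_poly.[a k] = c k * \prod_(j < m.+1 | j != k) (a k - a j).
Proof.
rewrite horner_boole (bigD1 k) //= subrr mul0r mulr0 add0r (bigD1 k) //=.
rewrite [X in _ + X]big1 ?addr0 //.
move=> i /negbTE hik; rewrite (bigD1 k) /=; last by rewrite eq_sym hik.
by rewrite subrr mul0r mulr0.
Qed.

Lemma boole_off_nodes x (hx : forall j : 'I_m.+1, x != a j) :
  boole_poly.[x] = \prod_(j < m.+1) (x - a j) * (lam + \sum_(i < m.+1) c i / (x - a i)).
Proof.
rewrite horner_boole mulrDr mulrC; congr (_ + _).
rewrite mulr_sumr; apply: eq_bigr => i _.
have hi : x - a i != 0 by rewrite subr_eq0.
rewrite [in RHS](bigD1 i) //=; field; exact: hi.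
Qed.

Lemma boole_sign_change (i i' : 'I_m.+1) :
  nat_of_ord i' = (nat_of_ord i).+1 -> boole_poly.[a i] * boole_poly.[a i'] < 0.
Proof.
move=> hii'.
have ne : i' != i by apply/eqP => e; rewrite e in hii'; lia.
have ne' : i != i' by rewrite eq_sym.
rewrite !boole_at_node (bigD1 i') //= [X in _ * (_ * X)](bigD1 i) //=.
rewrite mulrACA [X in _ * X]mulrACA.
set p1 := \prod_(j < m.+1 | _) _.
set p2 := \prod_(j < m.+1 | _) _.
have hp : 0 < p1 * p2.
  rewrite /p1 /p2 [X in _ * X](eq_bigl (fun j => (j != i) && (j != i'))); last first.
    by move=> j; rewrite andbC.
  rewrite -big_split /=; apply: prodr_gt0 => j /andP[hj1 hj2].
  have hjm := ltn_ord j.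
  have hi'm := ltn_ord i'.
  have [hlt|hgt] : (nat_of_ord j < i)%N \/ (nat_of_ord i' < j)%N.
    move: hj1 hj2 hii'; rewrite -!(inj_eq (@ord_inj _)) /=.
    move: (nat_of_ord i) (nat_of_ord i') (nat_of_ord j) => x y z; lia.
  - apply: mulr_gt0; rewrite subr_gt0; apply: a_lt => //; try lia.
    rewrite nmulr_rgt0; rewrite subr_lt0; apply: a_lt => //; try lia.
have hd : (a i - a i') * (a i' - a i) < 0.
  have h : a i < a i' by apply: a_lt; have := ltn_ord i'; lia.
  rewrite pmulr_llt0 ?subr_gt0 // subr_lt0 //.
have hc : 0 < c i * c i' by apply: mulr_gt0; apply: c_pos_ord.
by rewrite pmulr_rlt0 // pmulr_llt0.
Qed.

Lemma divr_diff (u v w : R) : u != 0 -> v != 0 -> w / u - w / v = w * (v - u) / (u * v).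
Proof. by move=> hu hv; field; apply/andP; split. Qed.

Definition far_left := a 0 - (\sum_(i < m.+1) c i) / lam - 1.

Lemma far_left_lt (j : 'I_m.+1) : far_left < a j.
Proof.
have hS : 0 <= (\sum_(i < m.+1) c i) / lam.
  apply: divr_ge0; last exact: ltW.
  by apply: sumr_ge0 => i _; apply/ltW; exact: c_pos_ord.
apply: lt_le_trans (_ : a 0 <= a j); last by apply: a_le => //; exact: ord_le.
rewrite /far_left; lra.
Qed.

Lemma rational_far_left_pos : 0 < lam + \sum_(i < m.+1) c i / (far_left - a i).
Proof.
set S := \sum_(i < m.+1) c i.
have hS : 0 < S.
  rewrite /S big_ord_recl /=; apply: ltr_wpDr; last exact: c_pos.
  by apply: sumr_ge0 => i _; apply/ltW; exact: (c_pos_ord (lift ord0 i)).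
have e : far_left - a 0 = - (S / lam + 1) by rewrite /far_left /S; ring.
have hneg : far_left - a 0 < 0.
  by rewrite e oppr_lt0; apply: ltr_wpDl; [apply: divr_ge0; apply: ltW|].
have h1 : S / (far_left - a 0) <= \sum_(i < m.+1) c i / (far_left - a i).
  rewrite /S mulr_suml; apply: ler_sum => i _.
  have hi0 : far_left - a i < 0 by rewrite subr_lt0 far_left_lt.
  rewrite -subr_ge0 divr_diff ?lt_eqF //.
  apply: divr_ge0; first apply: mulr_ge0.
  - by apply/ltW; exact: c_pos_ord.
  - by rewrite subr_ge0 lerD2l lerN2; apply: a_le => //; exact: ord_le.
  - by apply/ltW; rewrite nmulr_rgt0.
have h2 : - lam < S / (far_left - a 0).
  rewrite ltr_ndivlMr // e mulrNN.
  have -> : lam * (S / lam + 1) = S + lam by field; rewrite lt0r_neq0.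
  by rewrite ltrDl.
lra.
Qed.

Lemma boole_sign_change_left : boole_poly.[far_left] * boole_poly.[a (@ord0 m)] < 0.
Proof.
have hx : forall j : 'I_m.+1, far_left != a j by move=> j; rewrite lt_eqF // far_left_lt.
rewrite boole_off_nodes // boole_at_node (bigD1 ord0) //= mulrACA -mulrA.
set p1 := \prod_(j < m.+1 | _) _.
set p2 := \prod_(j < m.+1 | _) _.
have hp : 0 < p1 * p2.
  rewrite /p1 /p2 -big_split /=; apply: prodr_gt0 => j hj.
  have h0 : a 0 < a j.
    apply: a_lt; last exact: ord_le.
    by move: hj; rewrite -(inj_eq (@ord_inj _)) /=; lia.
  rewrite nmulr_rgt0 ?subr_lt0 ?far_left_lt //.
have hc0 : 0 < c 0 by apply: c_pos.
have hx0 : far_left - a 0 < 0 by rewrite subr_lt0 (far_left_lt ord0).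
have hL := rational_far_left_pos.
set L := lam + _ in hL *.
have -> : (far_left - a 0) * p1 * (c 0 * (L * p2)) = ((far_left - a 0) * (c 0 * L)) * (p1 * p2)
  by ring.
rewrite pmulr_llt0 // pmulr_llt0 //; exact: mulr_gt0.
Qed.

Lemma size_index_enum n : size (index_enum 'I_n) = n.
Proof. by rewrite -[index_enum _]enumT size_enum_ord. Qed.

Lemma size_node_poly : size node_poly = m.+2.
Proof. by rewrite /node_poly size_prod_XsubC size_index_enum. Qed.

Lemma node_poly_split (i : 'I_m.+1) : node_poly = ('X - (a i)%:P) * cofactor i.
Proof. by rewrite /node_poly (bigD1 i). Qed.

Lemma size_cofactor (i : 'I_m.+1) : size (cofactor i) = m.+1.
Proof.
have := size_node_poly.
rewrite (node_poly_split i) size_monicM ?monicXsubC ?monic_neq0 ?monic_prod_XsubC //.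
by rewrite size_XsubC add2n /= => [[]].
Qed.

Lemma boole_coef_top : boole_poly`_m.+1 = lam.
Proof.
have hP : node_poly`_m.+1 = 1.
  have := lead_coef_prod_XsubC (index_enum 'I_m.+1) xpredT (fun j => a j).
  by rewrite lead_coefE -/node_poly size_node_poly.
rewrite /boole_poly coefD coefZ hP mulr1 coef_sum big1 ?addr0 //.
by move=> i _; rewrite coefZ nth_default ?mulr0 // size_cofactor.
Qed.

Lemma boole_coef_next : boole_poly`_m = lam * (- \sum_(j < m.+1) a j) + \sum_(i < m.+1) c i.
Proof.
have hP : node_poly`_m = - \sum_(j < m.+1) a j.
  rewrite /node_poly -(big_map (fun j : 'I_m.+1 => a j) xpredT (fun z => 'X - z%:P)).
  have hs : size [seq a j | j : 'I_m.+1 <- index_enum 'I_m.+1] = m.+1.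
    by rewrite size_map size_index_enum.
  have := @coefPn_prod_XsubC _ [seq a j | j : 'I_m.+1 <- index_enum 'I_m.+1].
  by rewrite hs /= => ->//; rewrite big_map.
rewrite /boole_poly coefD coefZ hP coef_sum; congr (_ + _).
apply: eq_bigr => i _; rewrite coefZ.
have := lead_coef_prod_XsubC (index_enum 'I_m.+1) (fun j => j != i) (fun j => a j).
by rewrite lead_coefE -/(cofactor i) size_cofactor => ->; rewrite mulr1.
Qed.

Lemma size_boole_poly : size boole_poly = m.+2.
Proof.
apply/eqP; rewrite eqn_leq; apply/andP; split.
  rewrite /boole_poly; apply: leq_trans (size_polyD _ _) _; rewrite geq_max.
  rewrite (leq_trans (size_scale_leq _ _)) ?size_node_poly //.
  apply: leq_trans (size_sum _ _ _) _; apply/bigmax_leqP => i _.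
  by rewrite (leq_trans (size_scale_leq _ _)) // size_cofactor.
rewrite ltnNge; apply/negP => /leq_sizeP /(_ m.+1 (leqnn _)).
by rewrite boole_coef_top => h; move: lam_gt0; rewrite h ltxx.
Qed.

Lemma gap_root_exists k : exists x, ((k < m)%N ==> ((a k < x < a k.+1) && root boole_poly x)).
Proof.
case hk: (k < m)%N; last by exists 0.
have hk1 : (k < m.+1)%N by lia.
have hk2 : (k.+1 < m.+1)%N by lia.
have := poly_ivtoo (ltW (a_incr hk)) (@boole_sign_change (Ordinal hk1) (Ordinal hk2) erefl).
by case => x; rewrite in_itv /= => hx hr; exists x; rewrite hx hr.
Qed.

Lemma left_root_exists : exists x, (x < a 0) && root boole_poly x.
Proof.
have := poly_ivtoo (ltW (far_left_lt ord0)) boole_sign_change_left.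
by case => x; rewrite in_itv /= => /andP[_ hx] hr; exists x; rewrite hx hr.
Qed.

Definition gap_root k := xchoose (gap_root_exists k).
Definition left_root := xchoose left_root_exists.

Lemma gap_rootP k : (k < m)%N -> a k < gap_root k < a k.+1 /\ root boole_poly (gap_root k).
Proof. by move=> hk; have /implyP /(_ hk) /andP[] := xchooseP (gap_root_exists k). Qed.

Lemma left_rootP : left_root < a 0 /\ root boole_poly left_root.
Proof. by have := xchooseP left_root_exists; case/andP. Qed.

Definition roots_seq := left_root :: [seq gap_root k | k <- iota 0 m].

Lemma roots_seq_uniq : uniq roots_seq.
Proof.
rewrite /roots_seq /=; apply/andP; split.
  apply/negP => /mapP [k]; rewrite mem_iota add0n => /andP[_ hk] e.
  have [/andP[h1 _] _] := gap_rootP hk; have [h2 _] := left_rootP.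
  have h3 : a 0 <= a k by apply: a_le => //; lia.
  by rewrite -e in h1; move: (lt_trans (le_lt_trans h3 h1) h2); rewrite ltxx.
rewrite map_inj_in_uniq ?iota_uniq //.
move=> i j; rewrite !mem_iota !add0n => /andP[_ hi] /andP[_ hj] e.
apply/eqP; case: (ltngtP i j) => // h; exfalso.
- have [/andP[_ h1] _] := gap_rootP hi; have [/andP[h2 _] _] := gap_rootP hj.
  have h3 : a i.+1 <= a j by apply: a_le; lia.
  by move: (lt_trans h1 (le_lt_trans h3 h2)); rewrite e ltxx.
- have [/andP[_ h1] _] := gap_rootP hj; have [/andP[h2 _] _] := gap_rootP hi.
  have h3 : a j.+1 <= a i by apply: a_le; lia.
  by move: (lt_trans h1 (le_lt_trans h3 h2)); rewrite e ltxx.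
Qed.

Lemma boole_factor : boole_poly = lam *: \prod_(z <- roots_seq) ('X - z%:P).
Proof.
have lead : lead_coef boole_poly = lam by rewrite lead_coefE size_boole_poly boole_coef_top.
rewrite -[in RHS]lead; apply: all_roots_prod_XsubC.
- by rewrite size_boole_poly /roots_seq /= size_map size_iota.
- rewrite /roots_seq /= left_rootP.2 /=; apply/allP => z /mapP [k].
  by rewrite mem_iota add0n => /andP[_ hk] ->; exact: (gap_rootP hk).2.
- by rewrite uniq_rootsE roots_seq_uniq.
Qed.

(* Boole's identity, from the X^m coefficient of the factorization of Q. *)
Lemma boole_identity :
  \sum_(k < m) (a k.+1 - gap_root k) + (a 0 - left_root) = (\sum_(i < m.+1) c i) / lam.
Proof.
have h := boole_coef_next; rewrite boole_factor coefZ in h.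
have hs : (size roots_seq).-1 = m by rewrite /roots_seq /= size_map size_iota.
rewrite -{1}hs coefPn_prod_XsubC ?hs // in h.
move: h; rewrite /roots_seq big_cons big_map big_ord_recl /=.
rewrite -(big_mkord xpredT (fun k => a k.+1)) /index_iota subn0 => h.
have -> : \sum_(k < m) (a k.+1 - gap_root k)
          = \sum_(k <- iota 0 m) a k.+1 - \sum_(k <- iota 0 m) gap_root k.
  have e1 : forall F : nat -> R, \sum_(k <- iota 0 m) F k = \sum_(k < m) F k.
    by move=> F; rewrite -(big_mkord xpredT) /index_iota subn0.
  by rewrite !e1 sumrB.
have e : \sum_(i < m.+1) c i = lam * (- (left_root + \sum_(k <- iota 0 m) gap_root k))
                              - lam * (- (a 0 + \sum_(k <- iota 0 m) a k.+1)).
  by rewrite h; ring.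
rewrite e; field; exact: lt0r_neq0.
Qed.

Lemma same_side k (j : 'I_m.+1) y z : (k < m)%N -> a k < y < a k.+1 -> a k < z < a k.+1 ->
  0 < (y - a j) * (z - a j).
Proof.
move=> hk /andP[hy1 hy2] /andP[hz1 hz2].
have hj := ord_le j.
case: (leqP (nat_of_ord j) k) => hjk.
  have h : a j <= a k by apply: a_le => //; lia.
  by apply: mulr_gt0; rewrite subr_gt0; apply: le_lt_trans h _.
have h : a k.+1 <= a j by apply: a_le.
rewrite nmulr_rgt0 subr_lt0; first exact: lt_le_trans hz2 h.
exact: lt_le_trans hy2 h.
Qed.

Lemma gap_root_neq k (j : 'I_m.+1) : (k < m)%N -> gap_root k != a j.
Proof.
move=> hk; have [hr _] := gap_rootP hk.
have := same_side j hk hr hr; apply: contraTneq => ->.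
by rewrite subrr mul0r ltxx.
Qed.

Lemma rational_gap_root k :
  (k < m)%N -> lam + \sum_(i < m.+1) c i / (gap_root k - a i) = 0.
Proof.
move=> hk; have [_ hroot] := gap_rootP hk.
move: hroot; rewrite /root boole_off_nodes; last by move=> j; exact: gap_root_neq.
rewrite mulf_eq0 => /orP[|/eqP //].
rewrite prodf_seq_eq0 => /hasP [j _ /=]; rewrite subr_eq0 => /eqP e.
by move: (gap_root_neq j hk); rewrite e eqxx.
Qed.

(* The rational function is decreasing on each gap, so it is positive left of r_k. *)
Lemma gap_root_min k x : (k < m)%N -> a k < x < a k.+1 ->
  lam + \sum_(i < m.+1) c i / (x - a i) <= 0 -> gap_root k <= x.
Proof.
move=> hk hx hgx; case: (leP (gap_root k) x) => // hlt; exfalso.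
have [hr _] := gap_rootP hk.
have hg : \sum_(i < m.+1) c i / (gap_root k - a i) < \sum_(i < m.+1) c i / (x - a i).
  apply: ltr_sum; first by apply/hasP; exists ord0 => //; exact: mem_index_enum.
  move=> j _; rewrite -subr_gt0.
  have hs := same_side j hk hx hr.
  have hnz : forall u v : R, 0 < u * v -> u != 0.
    by move=> u v huv; apply/negP => /eqP e; move: huv; rewrite e mul0r ltxx.
  have hnz' : gap_root k - a j != 0 by apply: (hnz _ (x - a j)); rewrite mulrC.
  rewrite divr_diff ?(hnz _ _ hs) //.
  apply: divr_gt0; last exact: hs.
  apply: mulr_gt0; first exact: c_pos_ord.
  by rewrite opprB addrA subrK subr_gt0.
have := rational_gap_root hk; lra.
Qed.

(* Boole's inequality: the zeros r_k are the gap roots, and the left root lies below a_0. *)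
Theorem boole_inequality : exists r : nat -> R,
  (forall k, (k < m)%N -> a k < r k < a k.+1 /\
     (forall x, a k < x < a k.+1 -> lam + \sum_(i < m.+1) c i / (x - a i) <= 0 -> r k <= x)) /\
  \sum_(k < m) (a k.+1 - r k) <= (\sum_(i < m.+1) c i) / lam.
Proof.
exists gap_root; split.
  by move=> k hk; split; [exact: (gap_rootP hk).1 | move=> x hx; exact: gap_root_min].
rewrite -boole_identity lerDl subr_ge0; exact/ltW/left_rootP.1.
Qed.

End Boole.
End BooleInequality.

From Stdlib Require Import Lra Lia ClassicalEpsilon.
Open Scope R_scope.
Unset Implicit Arguments.

Fixpoint sumR (f : nat -> R) (n : nat) : R :=
  match n with O => 0 | S k => sumR f k + f k end.

Section BooleReals.
Local Open Scope ring_scope.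

Lemma big_sumR (F : nat -> R) n : \sum_(i < n) F i = sumR F n.
Proof.
elim: n => [|n IH]; first by rewrite big_ord0.
by rewrite big_ord_recr /= IH.
Qed.

Lemma boole_inequality_R (m : nat) (a c : nat -> R) (lam : R) :
  Rlt 0 lam -> (forall i, (i < m)%N -> Rlt (a i) (a i.+1)) -> (forall i, (i <= m)%N -> Rlt 0 (c i)) ->
  exists r : nat -> R,
   (forall k, (k < m)%N -> (Rlt (a k) (r k) /\ Rlt (r k) (a k.+1)) /\
      (forall x, Rlt (a k) x -> Rlt x (a k.+1) ->
          Rle (Rplus lam (sumR (fun i => Rdiv (c i) (Rminus x (a i))) m.+1)) 0 -> Rle (r k) x)) /\
   Rle (sumR (fun k => Rminus (a k.+1) (r k)) m) (Rdiv (sumR c m.+1) lam).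
Proof.
move=> /RltP hl ha hc.
have ha' : forall i, (i < m)%N -> a i < a i.+1 by move=> i hi; apply/RltP; exact: ha.
have hc' : forall i, (i <= m)%N -> 0 < c i by move=> i hi; apply/RltP; exact: hc.
have [r [h1 h2]] := BooleInequality.boole_inequality hl ha' hc'.
exists r; split.
  move=> k hk; have [/andP[/RltP p1 /RltP p2] p3] := h1 k hk; split; first by split.
  move=> x hx1 hx2 hg; apply/RleP; apply: p3.
    by apply/andP; split; apply/RltP.
  by rewrite (big_sumR (fun i => c i / (x - a i))); apply/RleP.
by rewrite (big_sumR (fun k => a k.+1 - r k)) (big_sumR c) in h2; apply/RleP.
Qed.
End BooleReals.

(* Re-importing ZArith makes %Z denote Z again (MathComp binds it to int). *)
From Stdlib Require Import ZArith.

Lemma sumR_S f n : sumR f (S n) = sumR f n + f n.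
Proof. reflexivity. Qed.

Lemma sumR_split f a b : sumR f (a + b) = sumR f a + sumR (fun i => f (a + i)%nat) b.
Proof.
induction b as [|b IH]; simpl.
- rewrite addn0; lra.
- rewrite addnS; simpl; rewrite IH; lra.
Qed.

Lemma sumR_ext f g n : (forall i, (i < n)%nat -> f i = g i) -> sumR f n = sumR g n.
Proof.
induction n as [|n IH]; simpl; intros H; [reflexivity|].
rewrite IH; [rewrite H; [reflexivity|lia]|intros; apply H; lia].
Qed.

Lemma sumR_le f g n : (forall i, (i < n)%nat -> f i <= g i) -> sumR f n <= sumR g n.
Proof.
induction n as [|n IH]; simpl; intros H; [lra|].
assert (f n <= g n) by (apply H; lia).
assert (sumR f n <= sumR g n) by (apply IH; intros; apply H; lia). lra.
Qed.

Lemma sumR_nonneg f n : (forall i, (i < n)%nat -> 0 <= f i) -> 0 <= sumR f n.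
Proof.
intros H; replace 0 with (sumR (fun _ => 0) n); [apply sumR_le; auto|].
induction n as [|n IH]; simpl; [lra|rewrite IH; [lra|intros; apply H; lia]].
Qed.

Lemma sumR_scal_r f k n : sumR (fun i => f i * k) n = sumR f n * k.
Proof. induction n; simpl; [ring| rewrite IHn; ring]. Qed.

Lemma sumR_window_le f p q m : (p + q <= m)%nat -> (forall i, (i < m)%nat -> 0 <= f i) ->
  sumR (fun i => f (p + i)%nat) q <= sumR f m.
Proof.
intros hm hf.
replace m with (p + (q + (m - p - q)))%nat by lia.
rewrite sumR_split sumR_split.
assert (0 <= sumR f p) by (apply sumR_nonneg; intros; apply hf; lia).
assert (0 <= sumR (fun i => f (p + (q + i))%nat) (m - p - q)).
{ apply sumR_nonneg; intros; apply hf; lia. }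
lra.
Qed.

Lemma sumR_shift1 f n : sumR f (S n) = f O + sumR (fun i => f (S i)) n.
Proof. induction n as [|n IH]; simpl in *; [ring| rewrite IH; ring]. Qed.

Lemma sumR_sum_f_R0 f n : sumR f (S n) = sum_f_R0 f n.
Proof. induction n as [|n IH]; [simpl; ring|]. simpl in *; rewrite <- IH; reflexivity. Qed.

Lemma series_ge f l b N0 :
  infinite_sum f l -> (forall N, (N0 <= N)%nat -> b <= sumR f N) -> b <= l.
Proof.
intros Hs H.
destruct (Rle_or_lt b l) as [h|h]; [exact h|exfalso].
destruct (Hs (b - l)) as [N HN]; [lra|].
specialize (HN (N + N0)%nat ltac:(lia)).
specialize (H (S (N + N0)) ltac:(lia)).
rewrite sumR_sum_f_R0 in H. unfold Rdist in HN. apply Rabs_def2 in HN. lra.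
Qed.

Lemma series_partial_le f l n : (forall i, 0 <= f i) -> infinite_sum f l -> sumR f n <= l.
Proof.
intros Hf Hs; destruct n as [|n]; [simpl|rewrite sumR_sum_f_R0; exact (sum_incr f n l Hs Hf)].
apply (series_ge f l 0 0 Hs); intros; apply sumR_nonneg; auto.
Qed.

Lemma series_nonneg f l : (forall i, 0 <= f i) -> infinite_sum f l -> 0 <= l.
Proof. intros Hf Hs; exact (series_partial_le f l 0 Hf Hs). Qed.

Lemma series_ext f g l : (forall n, f n = g n) -> infinite_sum f l -> infinite_sum g l.
Proof.
intros e; apply Un_cv_ext; intros n; apply PartSum.sum_eq; auto.
Qed.

Lemma series_opp f l : infinite_sum f l -> infinite_sum (fun n => - f n) (- l).
Proof.
intros Hs; apply (Un_cv_ext (opp_seq (sum_f_R0 f))); [|exact (CV_opp _ _ Hs)].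
intros n; unfold opp_seq; induction n as [|n IH]; simpl; [|rewrite <- IH]; ring.
Qed.

Lemma series_cons f l x : infinite_sum f l ->
  infinite_sum (fun n => match n with O => x | S j => f j end) (x + l).
Proof.
intros Hs; apply (CV_shift _ 1).
apply (Un_cv_ext (fun n => x + sum_f_R0 f n)).
- intros n; rewrite Nat.add_1_r -!sumR_sum_f_R0.
  symmetry; exact (sumR_shift1 _ _).
- apply (CV_plus (fun _ => x) _ x l); [intros e he; exists O; intros; unfold Rdist;
    rewrite Rminus_diag Rabs_R0; lra | exact Hs].
Qed.

Lemma series_tail f l : infinite_sum f l -> infinite_sum (fun n => f (S n)) (l - f O).
Proof.
intros Hs.
apply (Un_cv_ext (fun n => sum_f_R0 f (n + 1)%coq_nat - f O)).
- intros n; rewrite Nat.add_1_r -!sumR_sum_f_R0.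
  rewrite (sumR_shift1 f (S n)); ring.
- apply (CV_minus _ (fun _ => f O)); [exact (CV_shift' _ 1 _ Hs)|].
  intros e he; exists O; intros; unfold Rdist; rewrite Rminus_diag Rabs_R0; lra.
Qed.

Lemma Zseries_ext u v l : (forall k, u k = v k) -> Zseries u l -> Zseries v l.
Proof.
intros e [l1 [l2 [h1 [h2 ->]]]]; exists l1, l2; split; [|split; [|reflexivity]];
  eapply series_ext; try eassumption; intros; apply e.
Qed.

Lemma Zseries_opp u l : Zseries u l -> Zseries (fun k => - u k) (- l).
Proof.
intros [l1 [l2 [h1 [h2 ->]]]]; exists (- l1), (- l2).
split; [exact (series_opp _ _ h1)|split; [exact (series_opp _ _ h2)|ring]].
Qed.

Lemma Zseries_reflect u l : Zseries u l -> Zseries (fun k => u (- k)%Z) l.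
Proof.
intros [l1 [l2 [h1 [h2 ->]]]]; exists (u 0%Z + l2), (l1 - u 0%Z).
split; [|split; [|ring]].
- apply (series_ext (fun n => match n with O => u 0%Z | S j => u (- Z.of_nat (S j))%Z end)).
  + intros [|j]; reflexivity.
  + exact (series_cons _ _ _ h2).
- apply (series_ext (fun n => u (Z.of_nat (S n)))).
  + intros n; rewrite Z.opp_involutive; reflexivity.
  + exact (series_tail _ _ h1).
Qed.

Lemma Zseries_zero_half u : Zseries u 0 -> (forall k, (k < 0)%Z -> 0 <= u k) ->
  exists l, infinite_sum (fun n => u (Z.of_nat n)) l /\ l <= 0.
Proof.
intros [l1 [l2 [h1 [h2 e]]]] hneg; exists l1; split; [exact h1|].
assert (0 <= l2); [|lra].
apply (series_nonneg _ _ (fun n => hneg (- Z.of_nat (S n))%Z ltac:(lia)) h2).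
Qed.

Definition indicator (P : nat -> Prop) (k : nat) : R :=
  if excluded_middle_informative (P k) then 1 else 0.

Definition count (P : nat -> Prop) (lo len : nat) : R :=
  sumR (fun i => indicator P (lo + i)) len.

Lemma indicator_cases P k : (indicator P k = 0 /\ ~ P k) \/ (indicator P k = 1 /\ P k).
Proof. unfold indicator; destruct (excluded_middle_informative (P k)); auto. Qed.

Lemma count_split P lo a b : count P lo (a + b) = count P lo a + count P (lo + a) b.
Proof.
unfold count; rewrite sumR_split; f_equal.
apply sumR_ext; intros i _; rewrite addnA; reflexivity.
Qed.

Lemma count_mono P lo a b : (a <= b)%nat -> count P lo a <= count P lo b.
Proof.
intros h; replace b with (a + (b - a))%nat by lia; rewrite count_split.
assert (0 <= count P (lo + a) (b - a)); [|lra].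
apply sumR_nonneg; intros i _; destruct (indicator_cases P (lo + a + i)) as [[-> _]|[-> _]]; lra.
Qed.

Lemma count_le_len P lo len : count P lo len <= INR len.
Proof.
unfold count; induction len as [|n IH]; [simpl; lra|].
rewrite S_INR; simpl; destruct (indicator_cases P (lo + n)) as [[-> _]|[-> _]]; lra.
Qed.

Lemma count_markov P lo len f theta :
  (forall i, (i < len)%nat -> 0 <= f i) ->
  (forall i, (i < len)%nat -> P (lo + i)%nat -> theta <= f i) ->
  count P lo len * theta <= sumR f len.
Proof.
intros hf hP; unfold count; rewrite <- sumR_scal_r; apply sumR_le; intros i hi.
destruct (indicator_cases P (lo + i)) as [[-> _]|[-> h]].
- rewrite Rmult_0_l; apply hf, hi.
- rewrite Rmult_1_l; apply hP; assumption.
Qed.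

Section HalfLine.
Variables (t s mu : nat -> R).
Hypothesis t_incr : forall n, t n < t (S n).
Hypothesis t_origin : t O = 0.
Hypothesis t_unbounded : forall M, exists n, M < t n.
Hypothesis mu_pos : forall k, 0 < mu k.
Variable L : R.
Hypothesis mu_sum : infinite_sum mu L.
Hypothesis balance_nonpos :
  forall n, exists l, infinite_sum (fun k => mu k / (s n - t k)) l /\ l <= 0.
Hypothesis s_between : forall n, t n < s n < t (S n).

Lemma t_lt i j : (i < j)%nat -> t i < t j.
Proof.
intros h; induction j as [|j IH]; [lia|].
destruct (Nat.eq_dec i j) as [->|hne]; [apply t_incr|].
assert (t i < t j) by (apply IH; lia). specialize (t_incr j); lra.
Qed.

Lemma t_le i j : (i <= j)%nat -> t i <= t j.
Proof.
intros h; destruct (Nat.eq_dec i j) as [->|hne]; [lra|].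
left; apply t_lt; lia.
Qed.

Lemma s_pos n : 0 < s n.
Proof. destruct (s_between n); pose proof (t_le 0 n ltac:(lia)); lra. Qed.

Lemma mu_partial_le n : sumR mu n <= L.
Proof. apply series_partial_le; [intros; left; apply mu_pos|exact mu_sum]. Qed.

(* The terms with t_k beyond t_(K+1) are bounded below by -mu_k / (t_(K+1) - s_n),
   so the partial sum up to K is at most the remaining mass over that distance. *)
Lemma partial_balance n K : (n <= K)%nat ->
  sumR (fun k => mu k / (s n - t k)) (S K) <= (L - sumR mu (S K)) / (t (S K) - s n).
Proof.
intros hnK.
set D := t (S K) - s n.
assert (hD : 0 < D).
{ unfold D; destruct (s_between n); pose proof (t_le (S n) (S K) ltac:(lia)); lra. }
destruct (balance_nonpos n) as [l [hl hl0]].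
set term := fun k => mu k / (s n - t k).
assert (hterm : forall k, (S K <= k)%nat -> - (mu k / D) <= term k).
{ intros k hk; unfold term; pose proof (t_le (S K) k hk); pose proof (mu_pos k).
  unfold D in *.
  replace (mu k / (s n - t k)) with (- (mu k / (t k - s n))) by (field; lra).
  apply Ropp_le_contravar; unfold Rdiv; apply Rmult_le_compat_l; [lra|].
  apply Rinv_le_contravar; lra. }
assert (hpart : forall d, sumR term (S K) - (sumR mu (S K + d) - sumR mu (S K)) / D
                          <= sumR term (S K + d)).
{ induction d as [|d IH]; [rewrite addn0; unfold Rdiv; rewrite Rminus_diag; lra|].
  rewrite addnS (sumR_S term (S K + d)) (sumR_S mu (S K + d)).
  pose proof (hterm (S K + d)%nat ltac:(lia)).
  replace ((sumR mu (S K + d) + mu (S K + d)%nat - sumR mu (S K)) / D) with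
    ((sumR mu (S K + d) - sumR mu (S K)) / D + mu (S K + d)%nat / D) by (field; lra).
  lra. }
assert (sumR term (S K) - (L - sumR mu (S K)) / D <= l); [|fold term; lra].
apply (series_ge term l _ (S K) hl); intros N hN.
replace N with (S K + (N - S K))%nat by lia.
eapply Rle_trans; [|apply hpart].
pose proof (mu_partial_le (S K + (N - S K))).
unfold Rdiv; apply Rplus_le_compat_l, Ropp_le_contravar, Rmult_le_compat_r;
  [left; apply Rinv_0_lt_compat; lra|lra].
Qed.

(* The first N0 terms, which include the term of the node t_0 = 0, are at least mu_0 / T. *)
Lemma head_lower_bound N0 n T : (1 <= N0)%nat -> (N0 <= S n)%nat -> s n <= T ->
  mu O / T <= sumR (fun k => mu k / (s n - t k)) N0.
Proof.
intros h1 h2 hT; pose proof (s_pos n); pose proof (mu_pos O).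
replace N0 with (S (N0 - 1)) by lia; rewrite sumR_shift1 t_origin Rminus_0_r.
assert (0 <= sumR (fun k => mu (S k) / (s n - t (S k))) (N0 - 1)).
{ apply sumR_nonneg; intros j hj.
  pose proof (t_le (S j) n ltac:(lia)); pose proof (mu_pos (S j)); destruct (s_between n).
  left; apply Rdiv_lt_0_compat; lra. }
assert (mu O / T <= mu O / s n); [|lra].
unfold Rdiv; apply Rmult_le_compat_l; [lra|apply Rinv_le_contravar; lra].
Qed.

Lemma chunk_nonpos N0 n K T : (1 <= N0)%nat -> (N0 <= n)%nat -> (n <= K)%nat -> s n <= T ->
  T + 2 * L * T / mu O <= t (S K) ->
  mu O / (2 * T) + sumR (fun j => mu (N0 + j)%nat / (s n - t (N0 + j)%nat)) (S (K - N0)) <= 0.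
Proof.
intros h1 h2 h3 hT hK.
pose proof (s_pos n); pose proof (mu_pos O).
assert (hL : 0 < L) by (pose proof (mu_partial_le 1); simpl in *; lra).
assert (hsplit : sumR (fun k => mu k / (s n - t k)) (S K) =
  sumR (fun k => mu k / (s n - t k)) N0 + sumR (fun j => mu (N0 + j)%nat / (s n - t (N0 + j)%nat)) (S (K - N0))).
{ replace (S K) with (N0 + S (K - N0))%nat by lia; apply sumR_split. }
pose proof (head_lower_bound N0 n T h1 ltac:(lia) hT) as hhead.
assert (htail : sumR (fun k => mu k / (s n - t k)) (S K) <= mu O / (2 * T)).
{ eapply Rle_trans; [apply partial_balance; exact h3|].
  pose proof (sumR_nonneg mu (S K) (fun i _ => Rlt_le _ _ (mu_pos i))).
  set Y := t (S K) - s n.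
  assert (hZ : 0 < 2 * L * T / mu O) by (apply Rdiv_lt_0_compat; nra).
  assert (hY : 2 * L * T / mu O <= Y) by (unfold Y; lra).
  replace (mu O / (2 * T)) with (L / (2 * L * T / mu O)) by (field; lra).
  apply Rle_trans with (L / Y).
  - unfold Rdiv; apply Rmult_le_compat_r; [left; apply Rinv_0_lt_compat|]; lra.
  - unfold Rdiv; apply Rmult_le_compat_l; [|apply Rinv_le_contravar]; lra. }
assert (mu O / (2 * T) = mu O / T - mu O / (2 * T)) by (field; lra).
lra.
Qed.

(* Main estimate on a block [N, 2N): if the masses beyond N0 <= N total at
   most eta, then sum_(N <= n < 2N) (t_(n+1) - s_n) <= 2 eta t_(2N) / mu_0.
   Boole's inequality is applied to the chunk of nodes t_(N0), ..., t_K, with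
   lam = mu_0 / (2 t_(2N)) and K so large that the tail beyond K is negligible;
   by chunk_nonpos each s_n lies right of the corresponding zero r. *)
Lemma block_gap_sum N0 eta N : (1 <= N0)%nat -> (N0 <= N)%nat -> L - sumR mu N0 <= eta ->
  sumR (fun i => t (S (N + i)) - s (N + i)%nat) N <= 2 * eta * t (2 * N)%nat / mu O.
Proof.
intros hN0 hN0N heta.
set T := t (2 * N)%nat.
assert (hT : 0 < T) by (unfold T; rewrite <- t_origin; apply t_lt; lia).
pose proof (mu_pos O) as hmu0.
set lam := mu O / (2 * T).
assert (hlam : 0 < lam) by (unfold lam; apply Rdiv_lt_0_compat; lra).
destruct (t_unbounded (T + 2 * L * T / mu O)) as [n1 hn1].
set K := maxn n1 (2 * N).
assert (hK : T + 2 * L * T / mu O <= t (S K))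
  by (left; eapply Rlt_le_trans; [exact hn1|apply t_le; unfold K; lia]).
set m := (K - N0)%nat.
set a := fun i => t (N0 + i)%nat.
set c := fun i => mu (N0 + i)%nat.
assert (ha : forall i, (i < m)%nat -> a i < a (S i)) by (intros i _; unfold a; rewrite addnS; apply t_incr).
destruct (boole_inequality_R m a c lam hlam ha (fun i _ => mu_pos _)) as [r [hr hsum]].
assert (hgap : forall i, (i < N)%nat ->
  t (S (N + i)) - s (N + i)%nat <= a (S (N - N0 + i)) - r (N - N0 + i)%nat).
{ intros i hi.
  assert (hai : a (N - N0 + i)%nat = t (N + i)%nat) by (unfold a; f_equal; lia).
  assert (haSi : a (S (N - N0 + i)) = t (S (N + i))) by (unfold a; f_equal; lia).
  destruct (hr (N - N0 + i)%nat ltac:(unfold m, K; lia)) as [_ hmin].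
  destruct (s_between (N + i)).
  assert (s (N + i)%nat <= T) by (pose proof (t_le (S (N + i)) (2 * N) ltac:(lia)); unfold T; lra).
  assert (r (N - N0 + i)%nat <= s (N + i)%nat); [|lra].
  apply hmin; [rewrite hai; lra|rewrite haSi; lra|].
  apply (chunk_nonpos N0 (N + i) K T); unfold K in *; auto; lia. }
assert (hr_pos : forall k, (k < m)%nat -> 0 <= a (S k) - r k)
  by (intros k hk; destruct (hr k hk) as [[_ h] _]; lra).
assert (hc : sumR c (S m) <= eta).
{ assert (sumR mu (S K) = sumR mu N0 + sumR c (S m))
    by (replace (S K) with (N0 + S m)%nat by (unfold m, K; lia); apply sumR_split).
  pose proof (mu_partial_le (S K)); lra. }
eapply Rle_trans; [apply sumR_le; exact hgap|].
eapply Rle_trans; [apply (sumR_window_le (fun k => a (S k) - r k) (N - N0) N m); [unfold m, K; lia|exact hr_pos]|].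
eapply Rle_trans; [exact hsum|].
replace (2 * eta * T / mu O) with (eta / lam) by (unfold lam; field; lra).
unfold Rdiv; apply Rmult_le_compat_r; [left; apply Rinv_0_lt_compat|]; lra.
Qed.

Definition gap n := t (S n) - t n.

Lemma gap_pos n : 0 < gap n.
Proof. unfold gap; specialize (t_incr n); lra. Qed.

Variables (Kc rho : R) (a0 : nat).
Hypothesis gaps_comparable : forall n k, (n <= k)%nat -> (k <= 2 * n)%nat ->
  gap k <= Kc * gap n /\ gap n <= Kc * gap k.
Hypothesis a0_pos : (1 <= a0)%nat.
Hypothesis rho_gt1 : 1 < rho.
Hypothesis t_growth : forall n, rho * t n <= t (a0 * n).

Lemma Kc_ge1 : 1 <= Kc.
Proof.
destruct (gaps_comparable 0 0 ltac:(lia) ltac:(lia)) as [h _].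
pose proof (gap_pos 0); nra.
Qed.

(* Iterating the block comparison: gaps grow at most by Kc per doubling. *)
Lemma gap_doubling_bound j N n : (N <= n)%nat -> (n <= expn 2 j * N)%nat -> gap n <= Kc ^ j * gap N.
Proof.
revert n; induction j as [|j IH]; intros n h1 h2.
- rewrite expn0 mul1n in h2; replace n with N by lia; simpl; lra.
- pose proof Kc_ge1; pose proof (gap_pos N).
  assert (hKj : 1 <= Kc ^ j) by (apply pow_R1_Rle; lra).
  destruct (leqP n (expn 2 j * N)) as [hle|hgt]; simpl.
  + eapply Rle_trans; [apply IH; auto|].
    assert (0 <= (Kc - 1) * (Kc ^ j * gap N)) by (apply Rmult_le_pos; nra); nra.
  + rewrite expnS in h2.
    assert (hpos : (0 < expn 2 j)%nat) by (rewrite expn_gt0; lia).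
    destruct (gaps_comparable (expn 2 j * N) n ltac:(lia) ltac:(lia)) as [hA _].
    assert (gap (expn 2 j * N) <= Kc ^ j * gap N) by (apply IH; [apply leq_pmull|]; lia).
    assert (Kc * gap (expn 2 j * N) <= Kc * (Kc ^ j * gap N)) by (apply Rmult_le_compat_l; lra).
    lra.
Qed.

Lemma t_increment_bound N d B :
  (forall i, (i < d)%nat -> gap (N + i) <= B) -> t (N + d)%nat - t N <= INR d * B.
Proof.
induction d as [|d IH]; intros h.
- rewrite addn0; simpl; lra.
- rewrite addnS S_INR.
  assert (t (N + d)%nat - t N <= INR d * B) by (apply IH; intros; apply h; lia).
  assert (gap (N + d) <= B) by (apply h; lia).
  unfold gap in *; lra.
Qed.

Definition growth_const := INR a0 * Kc ^ a0 / (rho - 1) + Kc.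

Lemma growth_const_pos : 0 < growth_const.
Proof.
unfold growth_const; pose proof Kc_ge1.
assert (0 <= INR a0 * Kc ^ a0 / (rho - 1)); [|lra].
apply Rmult_le_pos; [apply Rmult_le_pos; [apply pos_INR|apply pow_le; lra]|].
left; apply Rinv_0_lt_compat; lra.
Qed.

(* t_(2N) is comparable to N times the gap at N: the growth condition bounds
   t_N by the increment t_(a0 N) - t_N, which is at most a0 N gaps of size
   at most Kc^a0 gap_N. *)
Lemma t_double_bound N : t (2 * N)%nat <= growth_const * INR N * gap N.
Proof.
pose proof Kc_ge1; pose proof (gap_pos N).
assert (hKa : 1 <= Kc ^ a0) by (apply pow_R1_Rle; lra).
assert (hINR : INR (a0 * N - N) <= INR a0 * INR N) by (rewrite <- mult_INR; apply le_INR; lia).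
assert (hfar : t (N + (a0 * N - N))%nat - t N <= INR (a0 * N - N) * (Kc ^ a0 * gap N)).
{ apply t_increment_bound; intros i hi; apply gap_doubling_bound; [lia|].
  apply (leq_trans (n := (a0 * N)%nat)); [lia|apply leq_mul; [apply ltnW, ltn_expl|]; lia]. }
replace (N + (a0 * N - N))%nat with (a0 * N)%nat in hfar by nia.
assert (hgrow : (rho - 1) * t N <= t (a0 * N)%nat - t N) by (specialize (t_growth N); lra).
assert (hnear : t (N + N)%nat - t N <= INR N * (Kc * gap N)).
{ apply t_increment_bound; intros i hi.
  destruct (gaps_comparable N (N + i) ltac:(lia) ltac:(lia)) as [h _]; exact h. }
replace (N + N)%nat with (2 * N)%nat in hnear by lia.
assert (t N * (rho - 1) <= INR a0 * INR N * (Kc ^ a0 * gap N)).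
{ eapply Rle_trans; [|apply Rmult_le_compat_r; [|exact hINR]]; [|apply Rmult_le_pos]; lra. }
assert (t N <= INR a0 * INR N * (Kc ^ a0 * gap N) / (rho - 1)).
{ apply (Rmult_le_reg_r (rho - 1)); [lra|]; unfold Rdiv; rewrite Rmult_assoc Rinv_l; lra. }
replace (growth_const * INR N * gap N) with
  (INR a0 * INR N * (Kc ^ a0 * gap N) / (rho - 1) + INR N * (Kc * gap N))
  by (unfold growth_const; field; lra).
lra.
Qed.

Definition late_zero (delta : R) (n : nat) : Prop := delta * gap n <= t (S n) - s n.

Variable delta : R.
Hypothesis delta_pos : 0 < delta.

Definition block_const := 2 * growth_const * Kc / (mu O * delta).

Lemma block_const_pos : 0 < block_const.
Proof.
unfold block_const; pose proof growth_const_pos; pose proof Kc_ge1; pose proof (mu_pos O).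
apply Rdiv_lt_0_compat; [|apply Rmult_lt_0_compat]; nra.
Qed.

(* On a block [N, 2N) beyond a tail of mass <= eta, the late zeros number at most
   block_const * eta * N: each contributes a gap >= delta gap_N / Kc to block_gap_sum. *)
Lemma block_count N0 eta N : (1 <= N0)%nat -> (N0 <= N)%nat -> L - sumR mu N0 <= eta ->
  count (late_zero delta) N N <= block_const * eta * INR N.
Proof.
intros h1 h2 h3.
pose proof Kc_ge1; pose proof (gap_pos N); pose proof (mu_pos O); pose proof growth_const_pos.
assert (htheta : 0 < delta * gap N / Kc) by (apply Rdiv_lt_0_compat; nra).
assert (hcount : count (late_zero delta) N N * (delta * gap N / Kc)
                 <= sumR (fun i => t (S (N + i)) - s (N + i)%nat) N).
{ apply count_markov.
  - intros i _; destruct (s_between (N + i)); lra.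
  - intros i hi hlate; unfold late_zero in hlate.
    destruct (gaps_comparable N (N + i) ltac:(lia) ltac:(lia)) as [_ h].
    apply Rle_trans with (delta * gap (N + i)); [|exact hlate].
    unfold Rdiv; rewrite Rmult_assoc; apply Rmult_le_compat_l; [lra|].
    apply (Rmult_le_reg_l Kc); [lra|]; rewrite <- Rmult_assoc, Rinv_r_simpl_m; lra. }
pose proof (block_gap_sum N0 eta N h1 h2 h3) as hgap.
pose proof (t_double_bound N) as hT.
assert (heta : 0 <= eta) by (pose proof (mu_partial_le N0); lra).
assert (2 * eta * t (2 * N)%nat / mu O <= 2 * eta * (growth_const * INR N * gap N) / mu O).
{ unfold Rdiv; apply Rmult_le_compat_r; [left; apply Rinv_0_lt_compat; lra|nra]. }
apply (Rmult_le_reg_r (delta * gap N / Kc)); [exact htheta|].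
replace (block_const * eta * INR N * (delta * gap N / Kc))
  with (2 * eta * (growth_const * INR N * gap N) / mu O)
  by (unfold block_const; field; repeat split; lra).
lra.
Qed.

Lemma dyadic_count N0 eta : (1 <= N0)%nat -> L - sumR mu N0 <= eta ->
  forall R, (N0 <= R)%nat -> count (late_zero delta) N0 (S R - N0) <= 2 * (block_const * eta) * INR R.
Proof.
intros h1 h2.
set D := block_const * eta.
assert (hD : 0 <= D).
{ pose proof (mu_partial_le N0); pose proof block_const_pos.
  unfold D; apply Rmult_le_pos; lra. }
intros R; induction R as [R IH] using (well_founded_induction lt_wf); intros hR.
destruct (leqP (2 * N0) R) as [hbig|hsmall].
- set q := Nat.div2 R.
  assert (hq : (2 * q <= R <= 2 * q + 1)%nat)
    by (pose proof (Nat.div2_odd R); destruct (Nat.odd R); simpl in *; lia).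
  replace (S R - N0)%nat with ((S q - N0) + (R - q))%nat by lia.
  rewrite count_split.
  replace (N0 + (S q - N0))%nat with (S q) by lia.
  assert (hlow : count (late_zero delta) N0 (S q - N0) <= 2 * D * INR q) by (apply IH; lia).
  assert (hhigh : count (late_zero delta) (S q) (R - q) <= D * INR (S q)).
  { eapply Rle_trans; [apply count_mono with (b := S q); lia|].
    apply (block_count N0 eta); auto; lia. }
  assert (hqR : 3 * INR q + 1 <= 2 * INR R).
  { assert (hq2 : INR (2 * q) <= INR R) by (apply le_INR; lia).
    rewrite mult_INR in hq2; simpl in hq2.
    assert (1 <= INR q) by (apply (le_INR 1); lia). lra. }
  rewrite S_INR in hhigh; nra.
- eapply Rle_trans; [apply count_mono with (b := N0); lia|].
  eapply Rle_trans; [apply (block_count N0 eta N0); auto; lia|].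
  assert (INR N0 <= INR R) by (apply le_INR; lia).
  pose proof (pos_INR N0); fold D; nra.
Qed.

Theorem half_line_density :
  forall eps, 0 < eps -> exists R0, forall R : nat, R0 <= INR R ->
    count (late_zero delta) 0 (S R) <= eps * INR R.
Proof.
intros eps heps.
pose proof block_const_pos.
set eta := eps / (4 * block_const).
assert (heta : 0 < eta) by (unfold eta; apply Rdiv_lt_0_compat; lra).
destruct (mu_sum eta heta) as [N HN].
set N0 := S N.
assert (htail : L - sumR mu N0 <= eta).
{ specialize (HN N (le_n N)); unfold Rdist in HN; unfold N0; rewrite sumR_sum_f_R0.
  apply Rabs_def2 in HN; lra. }
exists (Rmax (INR N0) (2 * INR N0 / eps)); intros R hR.
assert (h1 : INR N0 <= INR R) by (eapply Rle_trans; [apply Rmax_l|exact hR]).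
assert (h2 : 2 * INR N0 / eps <= INR R) by (eapply Rle_trans; [apply Rmax_r|exact hR]).
assert (hNR : (N0 <= R)%nat) by (apply INR_le in h1; lia).
replace (S R) with (N0 + (S R - N0))%nat by lia.
rewrite count_split add0n.
pose proof (count_le_len (late_zero delta) 0 N0) as hhead.
pose proof (dyadic_count N0 eta ltac:(unfold N0; lia) htail R hNR) as hrest.
replace (2 * (block_const * eta)) with (eps / 2) in hrest by (unfold eta; field; lra).
assert (INR N0 <= eps / 2 * INR R).
{ apply (Rmult_le_reg_l (2 / eps)); [apply Rdiv_lt_0_compat; lra|].
  replace (2 / eps * (eps / 2 * INR R)) with (INR R) by (field; lra).
  replace (2 / eps * INR N0) with (2 * INR N0 / eps) by (field; lra); exact h2. }
lra.
Qed.

End HalfLine.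

Lemma zero_density_of_count (P : Z -> Prop) (g : Z -> nat) (bad : nat -> Prop) :
  (forall n, P n -> bad (g n) /\ INR (g n) <= Rabs (IZR n)) ->
  (forall n m, P n -> P m -> g n = g m -> n = m) ->
  (forall eps, 0 < eps -> exists R0, forall R : nat, R0 <= INR R -> count bad 0 (S R) <= eps * INR R) ->
  zero_density P.
Proof.
intros hP hinj hcount eps heps.
destruct (hcount (eps / 2) ltac:(lra)) as [R0 hR0].
exists (Rmax R0 1); intros Rr l hRr hnd hl.
assert (h1 : R0 <= Rr) by (eapply Rle_trans; [apply Rmax_l|exact hRr]).
assert (h2 : 1 <= Rr) by (eapply Rle_trans; [apply Rmax_r|exact hRr]).
destruct (archimed Rr) as [hu1 hu2].
set R := Z.to_nat (up Rr).
assert (hINR : INR R = IZR (up Rr)) by (unfold R; rewrite INR_IZR_INZ Z2Nat.id; [|apply le_IZR]; lra).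
set bads := List.filter (fun k => if excluded_middle_informative (bad k) then true else false) (List.seq 0 (S R)).
assert (hbads : INR (length bads) = count bad 0 (S R)).
{ unfold bads, count; generalize (S R); intros n; induction n as [|n IH]; [reflexivity|].
  rewrite List.seq_S List.filter_app List.length_app plus_INR IH sumR_S add0n.
  unfold indicator; simpl; destruct (excluded_middle_informative (bad n)); simpl; lra. }
assert (hlen : (length l <= length bads)%coq_nat).
{ rewrite <- (length_map g l); apply NoDup_incl_length.
  - apply NoDup_map_NoDup_ForallPairs; [|exact hnd].
    intros x y hx hy; apply hinj; apply hl; assumption.
  - intros k hk; apply in_map_iff in hk as [n [<- hn]].
    destruct (hl n hn) as [hPn hn2]; destruct (hP n hPn) as [hb hk].
    apply List.filter_In; split.
    + apply List.in_seq; split; [lia|].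
      assert (hlt : INR (g n) < INR R) by lra; apply INR_lt in hlt; lia.
    + destruct (excluded_middle_informative (bad (g n))); [reflexivity|contradiction]. }
apply le_INR in hlen; rewrite hbads in hlen.
assert (count bad 0 (S R) <= eps / 2 * INR R) by (apply hR0; lra).
assert (eps / 2 * INR R <= eps / 2 * (Rr + 1)) by (apply Rmult_le_compat_l; lra).
assert (eps / 2 * 1 <= eps / 2 * Rr) by (apply Rmult_le_compat_l; lra).
lra.
Qed.

Lemma zero_density_transfer (P Q : Z -> Prop) (h : Z -> Z) :
  (forall n, P n -> Q (h n) /\ Rabs (IZR (h n)) <= Rabs (IZR n)) ->
  (forall n m, P n -> P m -> h n = h m -> n = m) ->
  zero_density Q -> zero_density P.
Proof.
intros hPQ hinj hQ eps heps.
destruct (hQ eps heps) as [R0 hR0]; exists R0; intros Rr l hRr hnd hl.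
rewrite <- (length_map h l); apply hR0; [exact hRr| |].
- apply NoDup_map_NoDup_ForallPairs; [|exact hnd].
  intros x y hx hy; apply hinj; apply hl; assumption.
- intros k hk; apply in_map_iff in hk as [n [<- hn]].
  destruct (hl n hn) as [hPn hn2]; destruct (hPQ n hPn) as [hQn hle]; split; [exact hQn|lra].
Qed.

Lemma Zincr_lt (t : Z -> R) : (forall n, t n < t (n + 1)%Z) -> forall n m, (n < m)%Z -> t n < t m.
Proof.
intros hinc n m hnm.
replace m with (n + Z.of_nat (S (Z.to_nat (m - n - 1))))%Z by lia.
induction (Z.to_nat (m - n - 1)) as [|d IH].
- apply hinc.
- replace (n + Z.of_nat (S (S d)))%Z with (n + Z.of_nat (S d) + 1)%Z by lia.
  specialize (hinc (n + Z.of_nat (S d))%Z); lra.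
Qed.

Lemma Zincr_le (t : Z -> R) : (forall n, t n < t (n + 1)%Z) -> forall n m, (n <= m)%Z -> t n <= t m.
Proof.
intros hinc n m h; destruct (Z.eq_dec n m) as [->|hne]; [lra|].
left; apply Zincr_lt; [exact hinc|lia].
Qed.

Record half_line_data (t mu s : Z -> R) : Prop := {
  hl_incr : forall n, t n < t (n + 1)%Z;
  hl_origin : t 0%Z = 0;
  hl_unbounded : forall M, exists N, forall n, (N <= n)%Z -> M < t n;
  hl_mu_pos : forall n, 0 < mu n;
  hl_mu_sum : exists L, Zseries mu L;
  hl_balance : forall n, (0 <= n)%Z -> Zseries (fun k => mu k / (s n - t k)) 0;
  hl_between : forall n, t n < s n < t (n + 1)%Z;
  hl_gaps : exists K, 0 < K /\ forall n k, (0 <= n <= k)%Z -> (k <= 2 * n)%Z ->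
    / K * (t (n + 1)%Z - t n) <= t (k + 1)%Z - t k /\ t (k + 1)%Z - t k <= K * (t (n + 1)%Z - t n);
  hl_growth : exists (a : Z) (rho : R), (1 <= a)%Z /\ 1 < rho /\
    forall n, (0 <= n)%Z -> rho * t n <= t (a * n)%Z }.

Theorem positive_half_density t mu s : half_line_data t mu s -> forall delta, 0 < delta ->
  zero_density (fun n => (0 <= n)%Z /\ t (n + 1)%Z - s n >= delta * (t (n + 1)%Z - t n)).
Proof.
intros [hinc h0 hunb hmu [L hL] hbal hbet [K [hK hgaps]] [a [rho [ha [hrho hgrow]]]]] delta hdelta.
destruct hL as [L1 [L2 [hL1 _]]].
set tn := fun k : nat => t (Z.of_nat k).
set sn := fun k : nat => s (Z.of_nat k).
assert (hshift : forall k : nat, Z.of_nat (S k) = (Z.of_nat k + 1)%Z) by lia.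
assert (hinc' : forall k, tn k < tn (S k)) by (intros k; unfold tn; rewrite hshift; apply hinc).
assert (hunb' : forall M, exists k, M < tn k).
{ intros M; destruct (hunb M) as [N hN]; exists (Z.to_nat N); apply hN; lia. }
assert (hbal' : forall n, exists l,
  infinite_sum (fun k => mu (Z.of_nat k) / (sn n - tn k)) l /\ l <= 0).
{ intros n; apply (Zseries_zero_half (fun k => mu k / (s (Z.of_nat n) - t k)));
    [apply hbal; lia|intros k hk].
  pose proof (Zincr_lt t hinc k 0%Z hk); pose proof (Zincr_le t hinc 0%Z (Z.of_nat n) ltac:(lia)).
  destruct (hbet (Z.of_nat n)); left; apply Rdiv_lt_0_compat; [apply hmu|lra]. }
assert (hbet' : forall n, tn n < sn n < tn (S n)) by (intros n; unfold tn, sn; rewrite hshift; apply hbet).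
assert (hgaps' : forall n k, (n <= k)%nat -> (k <= 2 * n)%nat ->
  gap tn k <= K * gap tn n /\ gap tn n <= K * gap tn k).
{ intros n k h1 h2; unfold gap, tn; rewrite !hshift.
  destruct (hgaps (Z.of_nat n) (Z.of_nat k) ltac:(lia) ltac:(lia)) as [e1 e2]; split; [exact e2|].
  apply (Rmult_le_reg_l (/ K)); [apply Rinv_0_lt_compat; lra|].
  rewrite <- Rmult_assoc, Rinv_l, Rmult_1_l; lra. }
assert (hgrow' : forall n, rho * tn n <= tn (Z.to_nat a * n)%nat).
{ intros n; unfold tn; replace (Z.of_nat (Z.to_nat a * n)) with (a * Z.of_nat n)%Z by lia.
  apply hgrow; lia. }
apply (zero_density_of_count _ Z.to_nat (late_zero tn sn delta)).
- intros n [hn hlate]; split.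
  + unfold late_zero, gap, tn, sn; rewrite hshift Z2Nat.id; [lra|exact hn].
  + rewrite INR_IZR_INZ Z2Nat.id // Rabs_pos_eq; [lra|apply IZR_le; lia].
- intros n m [hn _] [hm _] e; lia.
- exact (half_line_density tn sn (fun k => mu (Z.of_nat k)) hinc' h0 hunb' (fun k => hmu _)
          L1 hL1 hbal' hbet' K rho (Z.to_nat a) hgaps' ltac:(lia) hrho hgrow' delta hdelta).
Qed.

Lemma between_not_node (t s : Z -> R) : (forall n, t n < t (n + 1)%Z) ->
  (forall n, t n < s n < t (n + 1)%Z) -> forall n k, s n <> t k.
Proof.
intros hinc hbet n k e; destruct (hbet n).
destruct (Z_lt_le_dec k (n + 1)) as [h|h].
- pose proof (Zincr_le t hinc k n ltac:(lia)); lra.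
- pose proof (Zincr_le t hinc (n + 1)%Z k h); lra.
Qed.

Lemma origin_fixed (t : Z -> R) (a : Z) (rho : R) : 1 < rho ->
  (forall n, rho * Rabs (t n) <= Rabs (t (a * n)%Z)) -> t 0%Z = 0.
Proof.
intros hrho hg; specialize (hg 0%Z); rewrite Z.mul_0_r in hg.
pose proof (Rabs_pos (t 0%Z)).
assert (e : Rabs (t 0%Z) = 0) by nra.
destruct (Rcase_abs (t 0%Z)) as [h|h]; [rewrite Rabs_left in e|rewrite Rabs_right in e]; lra.
Qed.

Lemma Cre_div_real (m x y : R) : x <> y -> Cre (Cdiv (RtoC m) (Csub (RtoC x) (RtoC y))) = m / (x - y).
Proof.
intros h; unfold Cre, Cdiv, Cmul, Cinv, Csub, RtoC; simpl.
assert (hxy : x - y <> 0) by lra.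
field; exact hxy.
Qed.

(* At a zero s_n of B off the nodes, A(s_n) is real and nonzero, so
   B(s_n) = A(s_n) sum_k mu_k / (s_n - t_k) forces the real series to vanish. *)
Lemma balance_at_zeros (t mu : Z -> R) (A B : Cx -> Cx) (s : Z -> R) :
  (forall n, t n < t (n + 1)%Z) ->
  (forall x : R, Cim (A (RtoC x)) = 0) ->
  (forall z : Cx, A z = C0 <-> exists n : Z, z = RtoC (t n)) ->
  (forall z : Cx, (forall n : Z, z <> RtoC (t n)) -> exists S : Cx,
     Zseries_C (fun n => Cdiv (RtoC (mu n)) (Csub z (RtoC (t n)))) S /\ B z = Cmul (A z) S) ->
  (forall n, t n < s n < t (n + 1)%Z) ->
  (forall n, B (RtoC (s n)) = C0) ->
  forall n, Zseries (fun k => mu k / (s n - t k)) 0.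
Proof.
intros hinc hreal hzeros hB hbet hzero n.
assert (hne : forall k, RtoC (s n) <> RtoC (t k)).
{ intros k e; injection e as e; exact (between_not_node t s hinc hbet n k e). }
destruct (hB (RtoC (s n)) hne) as [[x y] [[hS _] hBS]].
rewrite hzero in hBS.
assert (hA : A (RtoC (s n)) <> C0) by (intros h; apply hzeros in h as [k hk]; exact (hne k hk)).
pose proof (hreal (s n)) as hAim.
destruct (A (RtoC (s n))) as [p q]; unfold Cim in hAim; simpl in hAim; subst q.
assert (hp : p <> 0) by (intros ->; apply hA; reflexivity).
unfold Cmul, C0 in hBS; simpl in hBS; injection hBS as e1 _.
assert (hx : x = 0) by (apply (Rmult_eq_reg_l p); lra).
apply (Zseries_ext (fun k => Cre (Cdiv (RtoC (mu k)) (Csub (RtoC (s n)) (RtoC (t k)))))).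
- intros k; apply Cre_div_real, (between_not_node t s hinc hbet).
- unfold Cre in hS |- *; simpl in hS; rewrite hx in hS; exact hS.
Qed.

(* The hypotheses of the corollary yield half-line data both for (t, mu, s)
   and, after the reflection n |-> -n (which maps the gap I_n to the gap
   I_(-n-1)), for (-t(-n), mu(-n), -s(-n-1)). *)
Section HalfLineData.
Variables (t mu s : Z -> R).
Hypothesis t_incr : forall n, t n < t (n + 1)%Z.
Hypothesis t_origin : t 0%Z = 0.
Hypothesis mu_pos : forall n, 0 < mu n.
Hypothesis mu_sum : exists L, Zseries mu L.
Hypothesis balance : forall n, Zseries (fun k => mu k / (s n - t k)) 0.
Hypothesis s_between : forall n, t n < s n < t (n + 1)%Z.
Hypothesis gaps : exists K, 0 < K /\ forall n k : Z,
  ((n <= k <= 2 * n)%Z \/ (2 * n <= k <= n)%Z) ->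
  / K * (t (n + 1)%Z - t n) <= t (k + 1)%Z - t k /\ t (k + 1)%Z - t k <= K * (t (n + 1)%Z - t n).
Hypothesis growth : exists (a : Z) (rho : R), (2 <= a)%Z /\ 1 < rho /\
  forall n, rho * Rabs (t n) <= Rabs (t (a * n)%Z).

Lemma half_line_data_direct :
  (forall M, exists N, forall n, (N <= n)%Z -> M < t n) -> half_line_data t mu s.
Proof.
intros hunb; destruct gaps as [K [hK hgaps]]; destruct growth as [a [rho [ha [hrho hg]]]].
split; auto.
- exists K; split; [exact hK|intros n k h1 h2; apply hgaps; lia].
- exists a, rho; split; [lia|split; [exact hrho|intros n hn]].
  specialize (hg n); rewrite !Rabs_pos_eq in hg; [exact hg| |]; rewrite <- t_origin;
    apply (Zincr_le t t_incr); nia.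
Qed.

Lemma half_line_data_reflected :
  (forall M, exists N, forall n, (n <= N)%Z -> t n < M) ->
  half_line_data (fun n => - t (- n)%Z) (fun n => mu (- n)%Z) (fun n => - s (- n - 1)%Z).
Proof.
intros hunb; destruct gaps as [K [hK hgaps]]; destruct growth as [a [rho [ha [hrho hg]]]].
assert (hopp : forall n, (- (n + 1) = - n - 1)%Z) by lia.
assert (hpred : forall n, (- n - 1 + 1 = - n)%Z) by lia.
split.
- intros n; rewrite hopp; pose proof (t_incr (- n - 1)%Z) as h; rewrite hpred in h; lra.
- rewrite t_origin; lra.
- intros M; destruct (hunb (- M)) as [N hN]; exists (- N)%Z; intros n hn.
  specialize (hN (- n)%Z ltac:(lia)); lra.
- intros n; apply mu_pos.
- destruct mu_sum as [L hL]; exists L; exact (Zseries_reflect mu L hL).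
- intros n _; rewrite <- Ropp_0.
  apply (Zseries_ext (fun k => - (mu (- k)%Z / (s (- n - 1)%Z - t (- k)%Z)))).
  + intros k; pose proof (between_not_node t s t_incr s_between (- n - 1)%Z (- k)%Z).
    field; lra.
  + apply Zseries_opp, (Zseries_reflect (fun k => mu k / (s (- n - 1)%Z - t k))), balance.
- intros n; rewrite hopp; destruct (s_between (- n - 1)%Z) as [h1 h2]; rewrite hpred in h2; lra.
- exists K; split; [exact hK|intros n k h1 h2; rewrite !hopp].
  destruct (hgaps (- n - 1)%Z (- k - 1)%Z ltac:(lia)) as [e1 e2]; rewrite !hpred in e1 e2; lra.
- exists a, rho; split; [lia|split; [exact hrho|intros n hn]].
  specialize (hg (- n)%Z); replace (a * - n)%Z with (- (a * n))%Z in hg by lia.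
  rewrite !Rabs_left1 in hg; [lra| |]; rewrite <- t_origin; apply (Zincr_le t t_incr); nia.
Qed.
End HalfLineData.

(* The positive side is positive_half_density for the data
   itself; the negative side is positive_half_density for the reflected data,
   transported back along n |-> -n - 1. *)
Theorem corollary5p4
  (t : Z -> R) (mu : Z -> R) (A B : Cx -> Cx) (s : Z -> R)
  (Ht_incr : forall n : Z, t n < t (n + 1)%Z)
  (Ht_pinf : forall M : R, exists N : Z, forall n : Z, (N <= n)%Z -> M < t n)
  (Ht_minf : forall M : R, exists N : Z, forall n : Z, (n <= N)%Z -> t n < M)
  (Hmu_pos : forall n : Z, 0 < mu n)
  (Hmu_sum : exists L : R, Zseries mu L)
  (HA_entire : entire A)
  (HA_real : forall x : R, Cim (A (RtoC x)) = 0)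
  (HA_zeros : forall z : Cx, A z = C0 <-> exists n : Z, z = RtoC (t n))
  (HA_simple : forall z l : Cx, A z = C0 -> has_Cderiv A z l -> l <> C0)
  (HB_entire : entire B)
  (HB_def : forall z : Cx, (forall n : Z, z <> RtoC (t n)) ->
     exists S : Cx,
       Zseries_C (fun n => Cdiv (RtoC (mu n)) (Csub z (RtoC (t n)))) S /\
       B z = Cmul (A z) S)
  (Hs_int : forall n : Z, t n < s n < t (n + 1)%Z)
  (Hs_zero : forall n : Z, B (RtoC (s n)) = C0)
  (Hasymp : exists K : R, 0 < K /\ forall n k : Z,
     ((n <= k <= 2 * n)%Z \/ (2 * n <= k <= n)%Z) ->
     / K * (t (n + 1)%Z - t n) <= t (k + 1)%Z - t k /\
     t (k + 1)%Z - t k <= K * (t (n + 1)%Z - t n))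
  (Hgrowth : exists (a : Z) (rho : R), (2 <= a)%Z /\ 1 < rho /\
     forall n : Z, rho * Rabs (t n) <= Rabs (t (a * n)%Z)) :
  forall delta : R, 0 < delta ->
    zero_density (fun n => 0 < t n /\
                   t (n + 1)%Z - s n >= delta * (t (n + 1)%Z - t n)) /\
    zero_density (fun n => t n < 0 /\
                   s n - t n >= delta * (t (n + 1)%Z - t n)).
Proof.
intros delta hdelta.
assert (t0 : t 0%Z = 0)
  by (destruct Hgrowth as [a [rho [_ [hrho hg]]]]; exact (origin_fixed t a rho hrho hg)).
pose proof (balance_at_zeros t mu A B s Ht_incr HA_real HA_zeros HB_def Hs_int Hs_zero) as hbal.
split.
- refine (zero_density_transfer _ _ (fun n => n) _ _ (positive_half_density t mu s
    (half_line_data_direct t mu s Ht_incr t0 Hmu_pos Hmu_sum hbal Hs_int Hasymp Hgrowth Ht_pinf) delta hdelta)).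
  + intros n [hpos hlate]; split; [split; [|exact hlate]|lra].
    destruct (Z_lt_le_dec n 0) as [h|h]; [pose proof (Zincr_lt t Ht_incr n 0%Z h); lra|exact h].
  + auto.
- refine (zero_density_transfer _ _ (fun n => - n - 1)%Z _ _ (positive_half_density _ _ _
    (half_line_data_reflected t mu s Ht_incr t0 Hmu_pos Hmu_sum hbal Hs_int Hasymp Hgrowth Ht_minf)
    delta hdelta)).
  + intros n [hneg hlate]; assert (hn : (n < 0)%Z).
    { destruct (Z_lt_le_dec n 0) as [h|h]; [exact h|pose proof (Zincr_le t Ht_incr 0%Z n h); lra]. }
    replace (- (- n - 1) - 1)%Z with n by lia; replace (- (- n - 1 + 1))%Z with n by lia.
    replace (- (- n - 1))%Z with (n + 1)%Z by lia.
    split; [split; [lia|lra]|].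
    rewrite <- !abs_IZR; apply IZR_le; lia.
  + intros n m _ _ e; lia.
Qed.
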